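(* Let $\mathcal{N}=\{1,\dots,N\}$ be a set of clients, let $G$ be a positive integer, and for each $n\in\mathcal{N}$ let $\rho_n>0$, $E_n>0$, $D_n>0$, $C_n\in\mathbb{R}$ and $p\in\mathbb{R}$. Each client $n$ chooses $x_n\in[0,D_n]$ and has cost $$F_n(x_n,\boldsymbol{x}_{-n})=\rho_n\left(\frac{1}{\sqrt{\big(x_n+\sum_{n'\neq n}x_{n'}\big)G}}+\frac{1}{G}\right)+E_nx_n+C_n+p .$$ Then for every $n\in\mathcal{N}$ and every $\boldsymbol{x}_{-n}\in\prod_{n'\neq n}[0,D_{n'}]$, the best response of client $n$ (the minimizer of $F_n(\cdot,\boldsymbol{x}_{-n})$ over $[0,D_n]$) is $$x_n^{\rm BR}(\boldsymbol{x}_{-n})=\min\left\{D_n,\ \max\left\{\sqrt[3]{\frac{\rho_n^2}{4GE_n^2}}-\sum_{n'\in\mathcal{N},n'\neq n}x_{n'},\ 0\right\}\right\}.$$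
   Context: Here $\boldsymbol{x}_{-n}$ denotes the vector of choices of all clients other than $n$. The cost is interpreted as $+\infty$ when $\sum_{n'\in\mathcal{N}}x_{n'}=0$. *)

From HB Require Import structures.
From mathcomp Require Import all_boot all_order all_algebra.
From mathcomp Require Import all_classical all_reals all_analysis.
Set Implicit Arguments. Unset Strict Implicit. Unset Printing Implicit Defensive.
Import Order.TTheory GRing.Theory Num.Theory.
Local Open Scope ring_scope.

Definition upd (R : realType) (N : nat) (x : 'I_N -> R) (n : 'I_N) (y : R)
  : 'I_N -> R := fun i => if i == n then y else x i.

Definition cost (R : realType) (N : nat) (G : nat) (rho E C : 'I_N -> R) (p : R)
  (x : 'I_N -> R) (n : 'I_N) : \bar R :=
  let s := \sum_(i < N) x i in
  if s == 0 then +oo%E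
  else ((rho n * ((Num.sqrt (s * G%:R))^-1 + (G%:R)^-1) + E n * x n + C n + p)%:E).

Definition best_response (R : realType) (N : nat) (G : nat)
  (rho E C D : 'I_N -> R) (p : R) (x : 'I_N -> R) (n : 'I_N) (y : R) : Prop :=
  0 <= y <= D n /\
  forall z, 0 <= z <= D n ->
    (cost G rho E C p (upd x n y) n <= cost G rho E C p (upd x n z) n)%E.

Definition cbrt (R : realType) (a : R) : R := a `^ (3%:R^-1).

(** In terms of the total contribution [t = x_n + S], where [S] is the sum of
    the other clients' choices, the cost of client [n] is, up to an additive
    constant, [phi t = a / sqrt t + E t] with [a = rho / sqrt G].  Substituting
    [t = s^2] gives [K / s + E s^2], which is strictly decreasing up to the
    point [s0] with [2 E s0^3 = K] and strictly increasing after it, so [phi] is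
    strictly unimodal with minimum at [c = s0^2], i.e. [c^3 = rho^2/(4 G E^2)].
    Over the interval [S <= t <= S + D] the unique minimizer of a strictly
    unimodal function is the projection of [c] onto the interval, which is the
    stated best response. *)

From mathcomp Require Import all_boot all_order all_algebra.
From mathcomp Require Import all_classical all_reals all_analysis.
From mathcomp Require Import ring lra.
Import Order.TTheory GRing.Theory Num.Theory.
Local Open Scope ring_scope.

Section InvAddSqr.
Variables (R : realFieldType) (K E s0 : R).
Hypotheses (E_gt0 : 0 < E) (s0_gt0 : 0 < s0) (K_def : K = 2 * E * s0 ^+ 3).

Lemma inv_add_sqr_sub s s' : s != 0 -> s' != 0 ->
  (K / s + E * s ^+ 2) - (K / s' + E * s' ^+ 2) =
  (s - s') * (E * ((s + s') * s * s') - K) / (s * s').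
Proof. by move=> s_neq0 s'_neq0; field; apply/andP. Qed.

Lemma inv_add_sqr_decr s s' : 0 < s' -> s' < s -> s <= s0 ->
  K / s + E * s ^+ 2 < K / s' + E * s' ^+ 2.
Proof.
move=> s'_gt0 s'_lt_s s_le_s0.
have s_gt0 : 0 < s by lra.
have prod_gt0 : 0 < s * s' by rewrite mulr_gt0.
have prod_lt : s * s' < s0 * s0 by nra.
have cube_lt : (s + s') * s * s' < 2 * s0 ^+ 3.
  have : 0 < s0 * (s0 * s0 - s * s') by rewrite mulr_gt0 ?subr_gt0.
  have : 0 <= s * s' * (2 * s0 - s - s') by rewrite mulr_ge0 ?ltW //; lra.
  nra.
rewrite -subr_lt0 inv_add_sqr_sub ?gt_eqF // pmulr_llt0 ?invr_gt0 ?mulr_gt0 //.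
rewrite pmulr_rlt0 ?subr_gt0 // K_def.
have : 0 < E * (2 * s0 ^+ 3 - (s + s') * s * s') by rewrite mulr_gt0 ?subr_gt0.
nra.
Qed.

Lemma inv_add_sqr_incr s s' : s0 <= s' -> s' < s ->
  K / s' + E * s' ^+ 2 < K / s + E * s ^+ 2.
Proof.
move=> s0_le_s' s'_lt_s.
have s'_gt0 := lt_le_trans s0_gt0 s0_le_s'.
have s_gt0 := lt_trans s'_gt0 s'_lt_s.
have s0_le_s := le_trans s0_le_s' (ltW s'_lt_s).
have prod_ge : s0 * s0 <= s * s' by apply: ler_pM => //; rewrite ltW.
have cube_gt : 2 * s0 ^+ 3 < (s + s') * s * s'.
  have : 0 < s * s' * (s + s' - 2 * s0) by rewrite !mulr_gt0 // subr_gt0; lra.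
  have : 0 <= s0 * (s * s' - s0 * s0) by rewrite mulr_ge0 ?subr_ge0 // ltW.
  nra.
rewrite -subr_gt0 inv_add_sqr_sub ?gt_eqF //.
rewrite divr_gt0 ?mulr_gt0 ?subr_gt0 // K_def.
have : 0 < E * ((s + s') * s * s' - 2 * s0 ^+ 3) by rewrite mulr_gt0 ?subr_gt0.
nra.
Qed.

End InvAddSqr.

Section InvSqrtAdd.
Variables (R : rcfType) (a E c : R).
Hypotheses (a_gt0 : 0 < a) (E_gt0 : 0 < E) (c_gt0 : 0 < c)
  (c_cube : 4 * E ^+ 2 * c ^+ 3 = a ^+ 2).

Let a_def : a = 2 * E * Num.sqrt c ^+ 3.
Proof.
have sqrt_c_ge0 := sqrtr_ge0 c; have := sqr_sqrtr (ltW c_gt0).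
set s := Num.sqrt c => s_sqr.
apply/eqP; rewrite -(@eqrXn2 _ 2) ?(ltW a_gt0) ?mulr_ge0 ?exprn_ge0 ?(ltW E_gt0) //.
by rewrite -c_cube -s_sqr; apply/eqP; ring.
Qed.

Let inv_sqrt_add_sqr t : 0 <= t ->
  a / Num.sqrt t + E * t = a / Num.sqrt t + E * Num.sqrt t ^+ 2.
Proof. by move=> t_ge0; rewrite sqr_sqrtr. Qed.

Lemma inv_sqrt_add_decr t t' : 0 < t' -> t' < t -> t <= c ->
  a / Num.sqrt t + E * t < a / Num.sqrt t' + E * t'.
Proof.
move=> t'_gt0 t'_lt_t t_le_c; have t_gt0 := lt_trans t'_gt0 t'_lt_t.
rewrite !inv_sqrt_add_sqr ?ltW //.
apply: (@inv_add_sqr_decr _ _ _ _ E_gt0 _ a_def);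
  by rewrite ?sqrtr_gt0 ?ltr_sqrt ?ler_sqrt // ltW.
Qed.

Lemma inv_sqrt_add_incr t t' : c <= t' -> t' < t ->
  a / Num.sqrt t' + E * t' < a / Num.sqrt t + E * t.
Proof.
move=> c_le_t' t'_lt_t; have t'_gt0 := lt_le_trans c_gt0 c_le_t'.
have t_gt0 := lt_trans t'_gt0 t'_lt_t.
rewrite !inv_sqrt_add_sqr ?ltW //.
apply: (@inv_add_sqr_incr _ _ _ _ E_gt0 _ a_def);
  by rewrite ?sqrtr_gt0 ?ltr_sqrt ?ler_sqrt // ltW.
Qed.

End InvSqrtAdd.

Section UnimodalArgmin.
Variables (R : realDomainType) (f : R -> R) (c : R).
Hypotheses (f_decr : forall t t', 0 < t' -> t' < t -> t <= c -> f t < f t')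
  (f_incr : forall t t', c <= t' -> t' < t -> f t' < f t).

Lemma unimodal_argmin_clamp lo hi t : lo <= t <= hi -> 0 < t ->
  t != Num.min hi (Num.max c lo) -> f (Num.min hi (Num.max c lo)) < f t.
Proof.
move=> /andP[lo_le_t t_le_hi] t_gt0 t_neq_m.
set m := Num.min hi (Num.max c lo).
have [m_lt_hi lo_lt_m] : (m < hi -> c <= m) /\ (lo < m -> m <= c).
  rewrite /m; case: (leP c lo) => ?;
    [case: (leP hi lo) | case: (leP hi c)] => ?; lra.
case: (ltgtP t m) => [t_lt_m | m_lt_t | t_eq_m].
- by apply: f_decr => //; apply: lo_lt_m; exact: le_lt_trans t_lt_m.
- by apply: f_incr => //; apply: m_lt_hi; exact: lt_le_trans t_le_hi.
- by rewrite t_eq_m eqxx in t_neq_m.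
Qed.

End UnimodalArgmin.

Lemma cbrt_gt0 (R : realType) (a : R) : 0 < a -> 0 < cbrt a.
Proof. exact: powR_gt0. Qed.

Lemma cbrtK (R : realType) (a : R) : 0 <= a -> cbrt a ^+ 3 = a.
Proof. by move=> a_ge0; rewrite -powR_mulrn ?powR_ge0 // -powRrM mulVf ?powRr1. Qed.

Section BestResponse.
Variables (R : realType) (N G : nat) (rho E D C : 'I_N -> R) (p : R).
Variables (x : 'I_N -> R) (n : 'I_N).

Local Notation S := (\sum_(m < N | m != n) x m).
Local Notation cost_n y := (cost G rho E C p (upd x n y) n).

Lemma sum_upd y : \sum_i upd x n y i = y + S.
Proof.
rewrite (bigD1 n) //= /upd eqxx; congr (_ + _).
by apply: eq_bigr => i /negbTE ->.
Qed.

Lemma cost_upd y : 0 <= y + S -> cost_n y =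
  if y + S == 0 then +oo%E
  else (rho n / Num.sqrt G%:R / Num.sqrt (y + S) + E n * (y + S)
        + (rho n / G%:R + C n + p - E n * S))%:E.
Proof.
move=> yS_ge0; rewrite /cost sum_upd /upd eqxx; case: eqP => // _.
by congr (_%:E); rewrite sqrtrM // invfM; ring.
Qed.

Lemma strict_min_best_response y : 0 <= y <= D n ->
  (forall z, 0 <= z <= D n -> z != y -> (cost_n y < cost_n z)%E) ->
  best_response G rho E C D p x n y /\
  forall y', best_response G rho E C D p x n y' -> y' = y.
Proof.
move=> y_in y_lt; split.
  split=> // z z_in; have [-> // | z_neq_y] := eqVneq z y.
  exact/ltW/y_lt.
move=> y' [y'_in y'_min]; apply/eqP/negPn/negP => y'_neq_y.
by have := y_lt y' y'_in y'_neq_y; rewrite ltNge y'_min.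
Qed.

Hypotheses (G_gt0 : (0 < G)%N) (rho_gt0 : 0 < rho n) (E_gt0 : 0 < E n)
  (D_gt0 : 0 < D n) (x_in : forall m, m != n -> 0 <= x m <= D m).

Local Notation c := (cbrt (rho n ^+ 2 / (4 * G%:R * E n ^+ 2))).
Local Notation xBR := (Num.min (D n) (Num.max (c - S) 0)).

Lemma best_response_cost_lt z : 0 <= z <= D n -> z != xBR ->
  (cost_n xBR < cost_n z)%E.
Proof.
move=> /andP[z_ge0 z_le_D] z_neq.
have S_ge0 : 0 <= S by apply: sumr_ge0 => i /x_in /andP[].
have G_pos : 0 < (G%:R : R) by rewrite ltr0n.
set a := rho n / Num.sqrt G%:R.
have a_gt0 : 0 < a by rewrite divr_gt0 ?sqrtr_gt0.
have A_gt0 : 0 < rho n ^+ 2 / (4 * G%:R * E n ^+ 2).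
  by rewrite divr_gt0 ?exprn_gt0 ?mulr_gt0.
have c_gt0 : 0 < c by exact: cbrt_gt0.
have c_cube : 4 * E n ^+ 2 * c ^+ 3 = a ^+ 2.
  rewrite cbrtK ?ltW // expr_div_n sqr_sqrtr ?ltW //.
  by field; rewrite ?gt_eqF.
have xBR_S : xBR + S = Num.min (D n + S) (Num.max c S).
  by rewrite addr_minl addr_maxl subrK add0r.
have m_gt0 : 0 < xBR + S by rewrite xBR_S lt_min lt_max c_gt0 ltr_pwDl.
have xBR_ge0 : 0 <= xBR by rewrite le_min le_max lexx orbT andbT ltW.
rewrite !cost_upd ?addr_ge0 ?(gt_eqF m_gt0) //.
case: eqP => [_ | /eqP zS_neq0]; first by rewrite ltry.
rewrite lte_fin ltrD2r xBR_S.
apply: (@unimodal_argmin_clamp _ (fun t => a / Num.sqrt t + E n * t) c).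
- by move=> t t'; exact: inv_sqrt_add_decr.
- by move=> t t'; exact: inv_sqrt_add_incr.
- by rewrite lerDr z_ge0 lerD2r.
- by rewrite lt_neqAle eq_sym zS_neq0 addr_ge0.
- by rewrite -xBR_S (inj_eq (addIr S)).
Qed.

End BestResponse.

Theorem lemma1 (R : realType) (N G : nat) (rho E D C : 'I_N -> R) (p : R)
  (hG : (0 < G)%N)
  (hrho : forall n, 0 < rho n) (hE : forall n, 0 < E n) (hD : forall n, 0 < D n)
  (n : 'I_N) (x : 'I_N -> R)
  (hx : forall m, m != n -> 0 <= x m <= D m) :
  let xBR := Num.min (D n)
      (Num.max (cbrt (rho n ^+ 2 / (4 * G%:R * E n ^+ 2))
                - \sum_(m < N | m != n) x m) 0) in
  best_response G rho E C D p x n xBR /\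
  (forall y, best_response G rho E C D p x n y -> y = xBR).
Proof.
move=> xBR; apply: strict_min_best_response.
  by rewrite ge_min le_refl le_min le_max lexx orbT ltW.
exact: best_response_cost_lt.
Qed.
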